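(* Let $\Omega\subset\mathbb{R}^d$ be bounded, $T>0$, $Q_T=\Omega\times(0,T)$, $\alpha\in(0,1)$, and let $a_1,a_2,a_3$ be positive constants. Assume $f,g\in C^{\alpha,\alpha/2}(\bar Q_T)$ and $u_0\in C^\alpha(\bar\Omega)$. Then any (weak) solution $u\in L^\infty(Q_T)$ of $\partial_t u=a_1fu+a_2g-a_3u^2$ in $Q_T$, $u(x,0)=u_0(x)$ for $x\in\Omega$, belongs to $C^{\alpha,\alpha/2}(\bar Q_T)$, i.e. is $\alpha$-Hölder continuous on $\bar\Omega\times[0,T]$.
   Context: $C^{\alpha,\alpha/2}(\bar Q_T)$ is the space of bounded functions $u$ with finite seminorm $\sup_{(x_1,t_1)\ne(x_2,t_2)}\frac{|u(x_1,t_1)-u(x_2,t_2)|}{|x_1-x_2|^\alpha+|t_1-t_2|^{\alpha/2}}$, with norm $\|u\|_{L^\infty}$ plus this seminorm. *)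

From HB Require Import structures.
From mathcomp Require Import all_boot all_order all_algebra.
From mathcomp Require Import all_classical all_reals all_analysis.
Set Implicit Arguments. Unset Strict Implicit. Unset Printing Implicit Defensive.
Import Order.TTheory GRing.Theory Num.Theory.
Import numFieldNormedType.Exports.
Local Open Scope classical_set_scope.
Local Open Scope ring_scope.

Definition eucl_norm (R : realType) (d : nat) (x : 'rV[R]_d) : R :=
  Num.sqrt (\sum_(i < d) x ord0 i ^+ 2).

Definition eucl_bounded (R : realType) (d : nat) (Om : set 'rV[R]_d) : Prop :=
  exists M : R, forall x, Om x -> eucl_norm x <= M.

Definition holder_space (R : realType) (d : nat) (alpha : R)
  (A : set 'rV[R]_d) (v : 'rV[R]_d -> R) : Prop :=
  (exists M : R, forall x, A x -> `|v x| <= M) /\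
  (exists C : R, forall x y, A x -> A y ->
     `|v x - v y| <= C * (eucl_norm (x - y)) `^ alpha).

Definition par_holder_space (R : realType) (d : nat) (alpha : R)
  (A : set ('rV[R]_d * R)) (v : 'rV[R]_d -> R -> R) : Prop :=
  (exists M : R, forall p, A p -> `|v p.1 p.2| <= M) /\
  (exists C : R, forall p q, A p -> A q ->
     `|v p.1 p.2 - v q.1 q.2| <=
       C * ((eucl_norm (p.1 - q.1)) `^ alpha + `|p.2 - q.2| `^ (alpha / 2))).

Definition closed_cyl (R : realType) (d : nat) (Om : set 'rV[R]_d) (T : R)
  : set ('rV[R]_d * R) :=
  [set p | closure Om p.1 /\ 0 <= p.2 <= T].

(* u is an L^infty (weak) solution of
     d_t u = a1 f u + a2 g - a3 u^2 in Q_T,  u(x,0) = u0(x),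
   in the integrated (Duhamel) form: for every x in Omega, t |-> u(x,t) is
   measurable, u is essentially bounded, and
     u(x,t) = u0(x) + int_0^t (a1 f u + a2 g - a3 u^2)(x,s) ds. *)
Definition weak_solution (R : realType) (d : nat) (Om : set 'rV[R]_d)
  (T a1 a2 a3 : R) (f g : 'rV[R]_d -> R -> R) (u0 : 'rV[R]_d -> R)
  (u : 'rV[R]_d -> R -> R) : Prop :=
  (exists M : R, forall x t, Om x -> 0 <= t <= T -> `|u x t| <= M) /\
  (forall x, Om x -> measurable_fun `[0, T] (u x)) /\
  (forall x t, Om x -> 0 <= t <= T ->
     u x t = u0 x + Rintegral lebesgue_measure `[0, t]
               (fun s => a1 * f x s * u x s + a2 * g x s - a3 * u x s ^+ 2)).

From HB Require Import structures.
From mathcomp Require Import all_boot all_order all_algebra.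
From mathcomp Require Import all_classical all_reals all_analysis.
From mathcomp Require Import measurable_realfun ring lra.

Set Implicit Arguments.
Unset Strict Implicit.
Unset Printing Implicit Defensive.

Import Order.TTheory GRing.Theory Num.Theory.
Import numFieldNormedType.Exports.
Local Open Scope classical_set_scope.
Local Open Scope ring_scope.

(* The equation only determines u on Omega x [0,T].  There u is Lipschitz in
   time, its time derivative a1 f u + a2 g - a3 u^2 being bounded.  In space,
   w = u(x,.) - u(y,.) satisfies |w t| <= A |x - y|^alpha + L int_0^t |w|,
   because u0, f, g are alpha-Hoelder and u is bounded, so Gronwall's lemma
   gives |w| <= K |x - y|^alpha.  As |t - s| <= T^(1-alpha/2) |t - s|^(alpha/2),
   u is Lipschitz for the parabolic distance |x - y|^alpha + |t - s|^(alpha/2),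
   a pseudometric for alpha <= 1, and McShane's infimal convolution extends it
   to the closed cylinder with the same constants. *)

Section EuclideanNorm.
Variable R : realType.

Lemma cauchy_schwarz_sum (n : nat) (a b : 'I_n -> R) :
  (\sum_i a i * b i) ^+ 2 <= (\sum_i a i ^+ 2) * (\sum_i b i ^+ 2).
Proof.
(* Lagrange's identity: the gap is half the sum of the (a_i b_j - a_j b_i)^2. *)
have lagrange : \sum_i \sum_j (a i * b j - a j * b i) ^+ 2 =
    2 * ((\sum_i a i ^+ 2) * (\sum_i b i ^+ 2) - (\sum_i a i * b i) ^+ 2).
  have expand i j : (a i * b j - a j * b i) ^+ 2 =
      (a i ^+ 2 * b j ^+ 2 - a i * b i * (a j * b j)) +
      (a j ^+ 2 * b i ^+ 2 - a j * b j * (a i * b i)) by ring.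
  under eq_bigr do under eq_bigr do rewrite expand.
  under eq_bigr do rewrite big_split /=.
  rewrite big_split /= [X in _ + X = _]exchange_big /= mulr_natl mulr2n.
  rewrite expr2 !big_distrlr -sumrB.
  by congr (_ + _); apply: eq_bigr => i _; exact: sumrB.
have : 0 <= \sum_i \sum_j (a i * b j - a j * b i) ^+ 2.
  by rewrite sumr_ge0 // => i _; rewrite sumr_ge0 // => j _; rewrite sqr_ge0.
by rewrite lagrange pmulr_rge0 // subr_ge0.
Qed.

Lemma sumr_sqr_ge0 (n : nat) (a : 'I_n -> R) : 0 <= \sum_i a i ^+ 2.
Proof. by rewrite sumr_ge0 // => i _; rewrite sqr_ge0. Qed.

Lemma cauchy_schwarz_sum_sqrt (n : nat) (a b : 'I_n -> R) :
  \sum_i a i * b i <= Num.sqrt (\sum_i a i ^+ 2) * Num.sqrt (\sum_i b i ^+ 2).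
Proof.
rewrite -sqrtrM ?sumr_sqr_ge0 // (le_trans (ler_norm _)) // -sqrtr_sqr.
by rewrite ler_wsqrtr // cauchy_schwarz_sum.
Qed.

Variable d : nat.
Implicit Types x y : 'rV[R]_d.

Lemma eucl_norm_ge0 x : 0 <= eucl_norm x.
Proof. exact: sqrtr_ge0. Qed.

Lemma eucl_norm0 : eucl_norm (0 : 'rV[R]_d) = 0.
Proof. by rewrite /eucl_norm big1 ?sqrtr0 // => i _; rewrite mxE expr0n. Qed.

Lemma eucl_normN x : eucl_norm (- x) = eucl_norm x.
Proof.
by rewrite /eucl_norm; congr Num.sqrt; apply: eq_bigr => i _; rewrite mxE sqrrN.
Qed.

Lemma eucl_normD x y : eucl_norm (x + y) <= eucl_norm x + eucl_norm y.
Proof.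
have expand : \sum_i (x + y) ord0 i ^+ 2 =
    \sum_i x ord0 i ^+ 2 + \sum_i y ord0 i ^+ 2 + 2 * \sum_i x ord0 i * y ord0 i.
  rewrite mulr_sumr -!big_split; apply: eq_bigr => i _; rewrite mxE /=; ring.
have cs := @cauchy_schwarz_sum_sqrt _ (fun i => x ord0 i) (fun i => y ord0 i).
have s0 := addr_ge0 (eucl_norm_ge0 x) (eucl_norm_ge0 y).
rewrite -(ger0_norm s0) /eucl_norm expand -sqrtr_sqr ler_wsqrtr //.
by rewrite sqrrD !sqr_sqrtr ?sumr_sqr_ge0 //; lra.
Qed.

End EuclideanNorm.

Section Snowflake.
Variable R : realType.

Lemma powR_ge_ratio (s c p : R) : 0 < s -> 0 <= c <= s -> p <= 1 ->
  s `^ p * (c / s) <= c `^ p.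
Proof.
move=> s_gt0 /andP[c_ge0 c_le] p_le1.
have [->|c_neq0] := eqVneq c 0; first by rewrite mul0r mulr0 powR_ge0.
have cs_ge0 : 0 <= c / s by rewrite divr_ge0 ?(ltW s_gt0).
have -> : c `^ p = s `^ p * (c / s) `^ p.
  by rewrite -powRM ?(ltW s_gt0) // mulrCA divff ?gt_eqF ?mulr1.
rewrite ler_wpM2l ?powR_ge0 // ger1_powR // divr_gt0 ?ler_pdivrMr //=.
- by rewrite mul1r.
- by rewrite lt_def c_neq0.
Qed.

Lemma powR_subadd (a b p : R) : 0 <= a -> 0 <= b -> p <= 1 ->
  (a + b) `^ p <= a `^ p + b `^ p.
Proof.
move=> a_ge0 b_ge0 p_le1.
have [ab0|ab_neq0] := eqVneq (a + b) 0.
  have [-> ->] : a = 0 /\ b = 0 by split; lra.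
  by rewrite addr0 lerDl powR_ge0.
have ab_gt0 : 0 < a + b by rewrite lt_def ab_neq0 addr_ge0.
have a_le : 0 <= a <= a + b by rewrite a_ge0 lerDl.
have b_le : 0 <= b <= a + b by rewrite b_ge0 lerDr.
have := lerD (powR_ge_ratio ab_gt0 a_le p_le1) (powR_ge_ratio ab_gt0 b_le p_le1).
apply: le_trans.
by rewrite -mulrDr -mulrDl divff // mulr1.
Qed.

Lemma powR_le_add (x y z p : R) : 0 <= p <= 1 -> 0 <= x -> 0 <= y -> 0 <= z ->
  x <= y + z -> x `^ p <= y `^ p + z `^ p.
Proof.
move=> /andP[p_ge0 p_le1] x_ge0 y_ge0 z_ge0 xyz.
apply: le_trans (powR_subadd y_ge0 z_ge0 p_le1).
by apply: ge0_ler_powR; rewrite ?nnegrE ?addr_ge0.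
Qed.

Lemma le_powR_scale (z c b : R) : 0 <= z <= c -> 0 <= b <= 1 ->
  z <= c `^ (1 - b) * z `^ b.
Proof.
move=> /andP[z_ge0 zc] /andP[b_ge0 b_le1].
have [->|z_neq0] := eqVneq z 0; first by rewrite mulr_ge0 ?powR_ge0.
rewrite -{1}(powRr1 z_ge0) -{1}(subrK b 1) powRD ?z_neq0 ?implybT //.
rewrite ler_wpM2r ?powR_ge0 //.
by apply: ge0_ler_powR; rewrite ?nnegrE ?subr_ge0 ?(le_trans z_ge0 zc).
Qed.

End Snowflake.

Definition par_dist (R : realType) (d : nat) (alpha : R)
    (p q : 'rV[R]_d * R) : R :=
  eucl_norm (p.1 - q.1) `^ alpha + `|p.2 - q.2| `^ (alpha / 2).

Section ParabolicDistance.
Variables (R : realType) (d : nat) (alpha : R).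
Implicit Types p q r : 'rV[R]_d * R.

Lemma par_dist_ge0 p q : 0 <= par_dist alpha p q.
Proof. by rewrite addr_ge0 ?powR_ge0. Qed.

Lemma par_distxx p : 0 < alpha -> par_dist alpha p p = 0.
Proof.
move=> alpha_gt0; rewrite /par_dist !subrr eucl_norm0 normr0.
by rewrite !powR0 ?addr0 ?gt_eqF ?divr_gt0.
Qed.

Lemma par_distC p q : par_dist alpha p q = par_dist alpha q p.
Proof. by rewrite /par_dist -opprB eucl_normN distrC. Qed.

Lemma par_dist_same_space (x : 'rV[R]_d) (s t : R) : 0 < alpha ->
  par_dist alpha (x, s) (x, t) = `|s - t| `^ (alpha / 2).
Proof.
by move=> alpha_gt0; rewrite /par_dist subrr eucl_norm0 powR0 ?add0r ?gt_eqF.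
Qed.

Lemma par_dist_same_time (x y : 'rV[R]_d) (t : R) : 0 < alpha ->
  par_dist alpha (x, t) (y, t) = eucl_norm (x - y) `^ alpha.
Proof.
by move=> alpha_gt0; rewrite /par_dist subrr normr0 powR0 ?addr0 ?gt_eqF ?divr_gt0.
Qed.

Lemma par_dist_triangle p q r : 0 <= alpha <= 1 ->
  par_dist alpha p r <= par_dist alpha p q + par_dist alpha q r.
Proof.
move=> /andP[alpha_ge0 alpha_le1]; rewrite /par_dist addrACA.
have alpha2 : 0 <= alpha / 2 <= 1.
  by rewrite divr_ge0 // ler_pdivrMr // mul1r (le_trans alpha_le1) ?ler1n.
apply: lerD; apply: powR_le_add; rewrite ?alpha_le1 ?alpha_ge0 ?eucl_norm_ge0 //.
- by have := eucl_normD (p.1 - q.1) (q.1 - r.1); rewrite addrA subrK.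
- exact: ler_distD.
Qed.

End ParabolicDistance.

Section McShaneExtension.
Variables (R : realType) (P : Type) (dist : P -> P -> R).
Hypothesis dist_ge0 : forall p q, 0 <= dist p q.
Hypothesis distxx : forall p, dist p p = 0.
Hypothesis distC : forall p q, dist p q = dist q p.
Hypothesis dist_triangle : forall p q r, dist p r <= dist p q + dist q r.

Lemma min_lipschitz (a b M : R) : `|Num.min a M - Num.min b M| <= `|a - b|.
Proof.
have := ler_norm (a - b); have := ler_norm (b - a); rewrite distrC.
by case: (leP a M); case: (leP b M); rewrite ler_norml => *; apply/andP; split; lra.
Qed.

(* The infimal convolution w p = inf_q (u q + C dist p q) is C-Lipschitz and
   agrees with u on S; truncating at M keeps the bound. *)
Lemma mcshane_extension (S : set P) (u : P -> R) (C M : R) : 0 <= C ->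
  (forall p, S p -> `|u p| <= M) ->
  (forall p q, S p -> S q -> `|u p - u q| <= C * dist p q) ->
  exists v : P -> R, [/\ forall p, `|v p| <= `|M|,
    forall p q, `|v p - v q| <= C * dist p q & forall p, S p -> v p = u p].
Proof.
move=> C_ge0 uM uC.
have [->|/set0P [q0 Sq0]] := eqVneq S set0.
  by exists (fun=> 0); split=> [p|p q|//]; rewrite ?subrr normr0 ?mulr_ge0.
pose E p := [set u q + C * dist p q | q in S].
pose w p := inf (E p).
have E_lb p : lbound (E p) (- M).
  move=> _ [q Sq <-]; have := uM q Sq; rewrite ler_norml => /andP[uqM _].
  by rewrite -[X in X <= _]addr0 lerD // mulr_ge0.
have E_neq0 p : E p !=set0 by exists (u q0 + C * dist p q0), q0.
have w_le p q : S q -> w p <= u q + C * dist p q.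
  by move=> Sq; apply: ge_inf; [exists (- M) | exists q].
have w_ge p : - M <= w p by exact: lb_le_inf.
have wS p : S p -> w p = u p.
  move=> Sp; apply/eqP; rewrite eq_le; apply/andP; split.
    by have := w_le p p Sp; rewrite distxx mulr0 addr0.
  apply: lb_le_inf => // _ [q Sq <-].
  by have := uC p q Sp Sq; rewrite ler_norml => /andP[_]; lra.
have w_lip p p' : w p <= w p' + C * dist p p'.
  rewrite -lerBlDr; apply: lb_le_inf => // _ [q Sq <-]; rewrite lerBlDr.
  apply: le_trans (w_le p q Sq) _.
  have := ler_wpM2l C_ge0 (dist_triangle p p' q); rewrite (distC p' q); lra.
exists (fun p => Num.min (w p) M); split.
- move=> p; have := ler_norm M; have := ler_norm (- M); rewrite normrN.
  have := w_ge p; case: (leP (w p) M); rewrite ler_norml => *.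
    by apply/andP; split; lra.
  by apply/andP; split; lra.
- move=> p q; apply: le_trans (min_lipschitz _ _ _) _; rewrite ler_norml.
  by have := w_lip p q; have := w_lip q p; rewrite (distC q p); lra.
- move=> p Sp; rewrite wS //; apply/min_l; exact: le_trans (ler_norm _) (uM p Sp).
Qed.

End McShaneExtension.

Section IntervalIntegral.
Variable R : realType.
Local Notation mu := (@lebesgue_measure R).

Lemma holder_within_continuous (D : set R) (h : R -> R) (C b : R) : 0 < b ->
  (forall s t, D s -> D t -> `|h s - h t| <= C * `|s - t| `^ b) ->
  {within D, continuous h}.
Proof.
move=> b_gt0 hC; apply/subspace_continuousP => t Dt.
apply/cvgrPdist_le => e e_gt0.
pose C' := `|C| + 1; have C'_gt0 : 0 < C' by rewrite ltr_pwDr.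
pose delta := (e / C') `^ b^-1.
have delta_gt0 : 0 < delta by rewrite powR_gt0 // divr_gt0.
rewrite near_withinE; near=> s => Ds /=.
have ts : `|t - s| < delta by near: s; exact: (@near_ball _ _ t delta delta_gt0).
apply: le_trans (hC t s Dt Ds) _.
have delta_b : delta `^ b = e / C'.
  by rewrite -powRrM mulVf ?gt_eqF // powRr1 // divr_ge0 ?ltW.
have ts_b : `|t - s| `^ b <= e / C'.
  rewrite -delta_b; apply: ge0_ler_powR; rewrite ?nnegrE ?(ltW b_gt0) //.
  exact: ltW.
apply: (@le_trans _ _ (C' * `|t - s| `^ b)).
  by rewrite ler_wpM2r ?powR_ge0 // (le_trans (ler_norm C)) ?lerDl.
apply: le_trans (ler_wpM2l (ltW C'_gt0) ts_b) _.
by rewrite mulrCA divff ?mulr1 // gt_eqF.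
Unshelve. all: by end_near.
Qed.

Lemma holder_measurable_fun (D : set R) (h : R -> R) (C b : R) :
  measurable D -> 0 < b ->
  (forall s t, D s -> D t -> `|h s - h t| <= C * `|s - t| `^ b) ->
  measurable_fun D h.
Proof.
move=> mD b_gt0 hC; apply: subspace_continuous_measurable_fun mD _.
exact: holder_within_continuous b_gt0 hC.
Qed.

Lemma lebesgue_measure_itv_le (x y : bool) (a b : R) : a <= b ->
  mu [set` Interval (BSide x a) (BSide y b)] = (b - a)%:E.
Proof.
move=> ab; rewrite lebesgue_measure_itv /= -EFinB lte_fin.
by case: ltgtP ab => // ->; rewrite subrr.
Qed.

Lemma Rintegral_cst_itv (x y : bool) (a b c : R) : a <= b ->
  Rintegral mu [set` Interval (BSide x a) (BSide y b)] (fun=> c) = c * (b - a).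
Proof.
by move=> ab; rewrite Rintegral_cst // [X in fine X]lebesgue_measure_itv_le.
Qed.

Lemma integrable_bounded_itv (a b M : R) (D : set R) (f : R -> R) :
  measurable D -> D `<=` `[a, b] -> measurable_fun `[a, b] f ->
  (forall t, a <= t <= b -> `|f t| <= M) -> mu.-integrable D (EFin \o f).
Proof.
move=> mD Dab mf fM; apply: measurable_bounded_integrable => //.
- apply: (@le_lt_trans _ _ (mu `[a, b])).
    by apply: le_measure; rewrite ?inE.
  by apply: compact_finite_measure; exact: segment_compact.
- exact: measurable_funS mf.
- exists M; split; first exact: num_real.
  move=> M' MM' t /Dab; rewrite /= in_itv /= => /fM /le_trans; apply; exact: ltW.
Qed.

Lemma normr_Rintegral_itv_le (x y : bool) (a b c : R) (f : R -> R) :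
  a <= b -> mu.-integrable [set` Interval (BSide x a) (BSide y b)] (EFin \o f) ->
  (forall t, [set` Interval (BSide x a) (BSide y b)] t -> `|f t| <= c) ->
  `|Rintegral mu [set` Interval (BSide x a) (BSide y b)] f| <= c * (b - a).
Proof.
move=> ab fI fc; rewrite -(Rintegral_cst_itv x y c ab).
apply: le_trans (le_normr_Rintegral _ fI) _ => //.
have Iab : [set` Interval (BSide x a) (BSide y b)] `<=` `[a, b].
  by apply: subset_itvScc; rewrite bnd_simp.
apply: le_Rintegral => //; first exact: integrable_norm.
by have := integrable_bounded_itv (M := `|c|) _ Iab (measurable_cst c); apply.
Qed.

End IntervalIntegral.

Section Gronwall.
Variable R : realType.
Local Notation mu := (@lebesgue_measure R).

Lemma absorb_half_bound (J : set R) (phi : R -> R) (W B : R) :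
  (forall s, J s -> phi s <= W) ->
  (forall M, (forall s, J s -> phi s <= M) ->
     forall s, J s -> phi s <= B + M / 2) ->
  forall s, J s -> phi s <= 2 * B.
Proof.
move=> phiW phiB s Js.
have ubS r : J r -> phi r <= sup (phi @` J).
  by move=> Jr; apply: ub_le_sup; [exists W => _ [? /phiW ? <-] | exists r].
have : sup (phi @` J) <= B + sup (phi @` J) / 2.
  by apply: ge_sup; [exists (phi s), s | move=> _ [r Jr <-]; exact: phiB].
by have := ubS s Js; lra.
Qed.

Section Step.
Variables (T L A W : R) (w : R -> R).
Hypotheses (L_ge0 : 0 <= L) (mw : measurable_fun `[0, T] w).
Hypothesis w_bounded : forall t, 0 <= t <= T -> `|w t| <= W.
Hypothesis w_int : forall t, 0 <= t <= T ->
  `|w t| <= A + L * Rintegral mu `[0, t] (fun s => `|w s|).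

Lemma integrable_normw (D : set R) : measurable D -> D `<=` `[0, T] ->
  mu.-integrable D (EFin \o (fun s => `|w s|)).
Proof.
move=> mD DT; apply: (integrable_bounded_itv (M := W)) mD DT _ _.
  exact: measurableT_comp (@normr_measurable R setT) mw.
by move=> t /w_bounded; rewrite normr_id.
Qed.

Lemma Rintegral_normw_le (x y : bool) (a b c : R) :
  0 <= a <= b -> b <= T ->
  (forall s, [set` Interval (BSide x a) (BSide y b)] s -> `|w s| <= c) ->
  Rintegral mu [set` Interval (BSide x a) (BSide y b)] (fun s => `|w s|)
    <= c * (b - a).
Proof.
move=> /andP[a_ge0 ab] bT wc; apply: le_trans (ler_norm _) _.
apply: normr_Rintegral_itv_le => // [|s /wc]; last by rewrite normr_id.
by apply: integrable_normw => //; apply: subset_itvScc; rewrite bnd_simp.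
Qed.

(* The integral up to t <= a + h splits at min t a; the part beyond a is at
   most h sup |w|, and L h <= 1/2 lets that supremum be absorbed. *)
Lemma gronwall_step (a h B : R) :
  0 <= a -> 0 <= h -> 0 <= B -> L * h <= 1 / 2 ->
  (forall t, 0 <= t <= T -> t <= a -> `|w t| <= B) ->
  forall t, 0 <= t <= T -> t <= a + h -> `|w t| <= 2 * (A + L * B * T).
Proof.
move=> a_ge0 h_ge0 B_ge0 Lh wB t0 t0T t0ah.
pose J := [set t | 0 <= t <= T /\ t <= a + h].
have J_bounded s : J s -> `|w s| <= W by case=> sT _; exact: w_bounded.
apply: (absorb_half_bound J_bounded _ (conj t0T t0ah)) => M wM t [tT tah].
have M_ge0 : 0 <= M := le_trans (normr_ge0 _) (wM t (conj tT tah)).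
have /andP[t_ge0 t_leT] := tT.
pose m := Num.min t a.
have m_ge0 : 0 <= m by rewrite /m le_min t_ge0.
have mt : m <= t by rewrite /m ge_min lexx.
have ma : m <= a by rewrite /m ge_min lexx orbT.
have split_int : Rintegral mu `[0, t] (fun s => `|w s|) =
    Rintegral mu `[0, m] (fun s => `|w s|) +
    Rintegral mu `]m, t] (fun s => `|w s|).
  have t_sub : `[0, t] `<=` `[0, T] by apply: subset_itvScc; rewrite bnd_simp.
  have := Rintegral_itvB (x := m) (integrable_normw (measurable_itv _) t_sub).
  by rewrite !bnd_simp => /(_ m_ge0 mt) <-; rewrite addrC subrK.
have int_before : Rintegral mu `[0, m] (fun s => `|w s|) <= B * (m - 0).
  apply: Rintegral_normw_le; rewrite ?lexx ?m_ge0 ?(le_trans mt) // => s.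
  rewrite /= in_itv /= => /andP[s_ge0 s_lem].
  apply: wB; last exact: le_trans s_lem ma.
  by rewrite s_ge0 (le_trans s_lem) // (le_trans mt).
have int_after : Rintegral mu `]m, t] (fun s => `|w s|) <= M * (t - m).
  apply: Rintegral_normw_le; rewrite ?m_ge0 // => s.
  rewrite /= in_itv /= => /andP[ms st].
  apply: wM; split; last exact: le_trans st tah.
  by rewrite (le_trans m_ge0 (ltW ms)) (le_trans st t_leT).
have LBm : L * (B * (m - 0)) <= L * B * T.
  by rewrite subr0 mulrA ler_wpM2l ?mulr_ge0 // (le_trans mt).
have LMt : L * (M * (t - m)) <= M / 2.
  have tmh : t - m <= h by rewrite /m; case: (leP t a) => _; lra.
  have : L * (t - m) <= 1 / 2 by apply: le_trans Lh; rewrite ler_wpM2l.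
  by rewrite mulrCA; nra.
have := w_int tT; rewrite split_int.
have := ler_wpM2l L_ge0 (lerD int_before int_after); lra.
Qed.

End Step.

Lemma gronwall (T L : R) : 0 < T -> 0 <= L ->
  exists K : R, forall (w : R -> R) (A W : R),
  0 <= A -> measurable_fun `[0, T] w ->
  (forall t, 0 <= t <= T -> `|w t| <= W) ->
  (forall t, 0 <= t <= T ->
     `|w t| <= A + L * Rintegral mu `[0, t] (fun s => `|w s|)) ->
  forall t, 0 <= t <= T -> `|w t| <= K * A.
Proof.
move=> T_gt0 L_ge0.
pose N := Num.bound (2 * L * T).
have LTN_ge0 : 0 <= 2 * L * T by rewrite !mulr_ge0 // ltW.
have LTN : 2 * L * T < N%:R by rewrite archi_boundP.
have N_gt0 : 0 < N%:R :> R := le_lt_trans LTN_ge0 LTN.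
pose h := T / N%:R.
have h_ge0 : 0 <= h by rewrite divr_ge0 ?ltW.
have Lh : L * h <= 1 / 2 by rewrite /h mulrA ler_pdivrMr //; lra.
(* c k A bounds |w| on [0, k h], by gronwall_step. *)
pose c := fix c (k : nat) : R :=
  if k is k'.+1 then 2 * (1 + L * c k' * T) else 1.
have c_ge0 k : 0 <= c k.
  elim: k => [|k IH] //=; apply: mulr_ge0 => //.
  by apply: addr_ge0 => //; rewrite !mulr_ge0 // ltW.
exists (c N) => w A W A_ge0 mw wW w_int.
suff claim k t : 0 <= t <= T -> t <= k%:R * h -> `|w t| <= c k * A.
  move=> t tT; apply: (claim N t tT).
  by rewrite /h mulrCA divff ?gt_eqF ?mulr1 //; case/andP: tT.
elim: k t => [|k IH] t tT tk.
  have /andP[t_ge0 t_leT] := tT; rewrite mul0r in tk.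
  have t0 : t = 0 by apply: le_anti; rewrite tk.
  by have := w_int t tT; rewrite t0 set_itv1 Rintegral_set1 mulr0 addr0 mul1r.
have -> : c k.+1 * A = 2 * (A + L * (c k * A) * T) by rewrite /=; ring.
apply: (gronwall_step L_ge0 mw wW w_int _ h_ge0 _ Lh IH tT).
- by rewrite mulr_ge0.
- by rewrite mulr_ge0.
- by rewrite -natr1 mulrDl mul1r in tk.
Qed.

End Gronwall.

Definition logistic_rhs (R : realType) (d : nat) (a1 a2 a3 : R)
    (f g u : 'rV[R]_d -> R -> R) (x : 'rV[R]_d) (s : R) : R :=
  a1 * f x s * u x s + a2 * g x s - a3 * u x s ^+ 2.

Section LogisticSolution.
Variables (R : realType) (d : nat) (Om : set 'rV[R]_d) (T alpha a1 a2 a3 : R).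
Variables (f g u : 'rV[R]_d -> R -> R) (u0 : 'rV[R]_d -> R).
Variables (Mf Mg Mu Cf Cg C0 : R).
Local Notation mu := (@lebesgue_measure R).
Local Notation F := (logistic_rhs a1 a2 a3 f g u).

Hypotheses (T_gt0 : 0 < T) (alpha_gt0 : 0 < alpha) (alpha_le1 : alpha <= 1).
Hypotheses (a1_ge0 : 0 <= a1) (a2_ge0 : 0 <= a2) (a3_ge0 : 0 <= a3).
Hypotheses (Mf_ge0 : 0 <= Mf) (Mg_ge0 : 0 <= Mg) (Mu_ge0 : 0 <= Mu).
Hypotheses (Cf_ge0 : 0 <= Cf) (Cg_ge0 : 0 <= Cg) (C0_ge0 : 0 <= C0).
Hypothesis f_bounded : forall x t, Om x -> 0 <= t <= T -> `|f x t| <= Mf.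
Hypothesis g_bounded : forall x t, Om x -> 0 <= t <= T -> `|g x t| <= Mg.
Hypothesis f_holder : forall x y s t, Om x -> Om y ->
  0 <= s <= T -> 0 <= t <= T -> `|f x s - f y t| <= Cf * par_dist alpha (x, s) (y, t).
Hypothesis g_holder : forall x y s t, Om x -> Om y ->
  0 <= s <= T -> 0 <= t <= T -> `|g x s - g y t| <= Cg * par_dist alpha (x, s) (y, t).
Hypothesis u0_holder : forall x y, Om x -> Om y ->
  `|u0 x - u0 y| <= C0 * eucl_norm (x - y) `^ alpha.
Hypothesis u_bounded : forall x t, Om x -> 0 <= t <= T -> `|u x t| <= Mu.
Hypothesis u_measurable : forall x, Om x -> measurable_fun `[0, T] (u x).
Hypothesis u_duhamel : forall x t, Om x -> 0 <= t <= T ->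
  u x t = u0 x + Rintegral mu `[0, t] (F x).

Let MF := a1 * Mf * Mu + a2 * Mg + a3 * Mu ^+ 2.

Lemma logistic_rhs_bounded x s : Om x -> 0 <= s <= T -> `|F x s| <= MF.
Proof.
move=> Ox sT; have fM := f_bounded Ox sT; have gM := g_bounded Ox sT.
have uM := u_bounded Ox sT.
rewrite /logistic_rhs /MF; apply: le_trans (ler_normB _ _) _; apply: lerD.
  apply: le_trans (ler_normD _ _) _.
  rewrite !normrM (ger0_norm a1_ge0) (ger0_norm a2_ge0).
  rewrite -mulrA -[a1 * Mf * Mu]mulrA.
  by apply: lerD; rewrite ler_wpM2l // ler_pM.
by rewrite normrM normrX (ger0_norm a3_ge0) ler_wpM2l // lerXn2r ?nnegrE.
Qed.

Lemma f_time_holder x s t : Om x -> 0 <= s <= T -> 0 <= t <= T ->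
  `|f x s - f x t| <= Cf * `|s - t| `^ (alpha / 2).
Proof. by move=> Ox sT tT; rewrite -(par_dist_same_space x) // f_holder. Qed.

Lemma g_time_holder x s t : Om x -> 0 <= s <= T -> 0 <= t <= T ->
  `|g x s - g x t| <= Cg * `|s - t| `^ (alpha / 2).
Proof. by move=> Ox sT tT; rewrite -(par_dist_same_space x) // g_holder. Qed.

Lemma logistic_rhs_measurable x : Om x -> measurable_fun `[0, T] (F x).
Proof.
move=> Ox; have alpha2_gt0 : 0 < alpha / 2 by rewrite divr_gt0.
have mf : measurable_fun `[0, T] (f x).
  apply: holder_measurable_fun alpha2_gt0 _ => // s t.
  by rewrite /= !in_itv /=; exact: f_time_holder.
have mg : measurable_fun `[0, T] (g x).
  apply: holder_measurable_fun alpha2_gt0 _ => // s t.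
  by rewrite /= !in_itv /=; exact: g_time_holder.
have mu' := u_measurable Ox.
apply: measurable_funB; last exact: measurable_funM _ (measurable_funX 2 mu').
apply: measurable_funD (measurable_funM (measurable_cst a2) mg).
exact: measurable_funM (measurable_funM (measurable_cst a1) mf) mu'.
Qed.

Lemma logistic_rhs_integrable x (D : set R) :
  Om x -> measurable D -> D `<=` `[0, T] -> mu.-integrable D (EFin \o F x).
Proof.
move=> Ox mD DT.
apply: integrable_bounded_itv mD DT (logistic_rhs_measurable Ox) _ => t.
exact: logistic_rhs_bounded.
Qed.

Lemma u_time_lipschitz x s t : Om x -> 0 <= s <= T -> 0 <= t <= T ->
  `|u x t - u x s| <= MF * `|t - s|.
Proof.
move=> Ox; wlog st : s t / s <= t.
  move=> le_st sT tT; have [/le_st|/ltW ts] := leP s t; first exact.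
  by rewrite distrC (distrC t); exact: le_st.
move=> sT tT; have /andP[s_ge0 _] := sT; have /andP[_ t_leT] := tT.
rewrite !u_duhamel // opprD addrACA subrr add0r.
have t_sub : `[0, t] `<=` `[0, T] by apply: subset_itvScc; rewrite bnd_simp.
have := Rintegral_itvB (x := s)
  (logistic_rhs_integrable Ox (measurable_itv _) t_sub).
rewrite !bnd_simp => /(_ s_ge0 st) ->; rewrite [`|t - s|]ger0_norm ?subr_ge0 //.
have st_sub : `]s, t] `<=` `[0, T] by apply: subset_itvScc; rewrite bnd_simp.
apply: normr_Rintegral_itv_le => //; first exact: logistic_rhs_integrable.
move=> r; rewrite /= in_itv /= => /andP[sr rt]; apply: logistic_rhs_bounded => //.
by rewrite (le_trans s_ge0 (ltW sr)) (le_trans rt t_leT).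
Qed.

Let B := a1 * Cf * Mu + a2 * Cg.
Let L := a1 * Mf + a3 * (2 * Mu).

Let B_ge0 : 0 <= B. Proof. by rewrite /B addr_ge0 ?mulr_ge0. Qed.
Let L_ge0 : 0 <= L. Proof. by rewrite /L addr_ge0 ?mulr_ge0. Qed.

Lemma u_diff_bounded x y s : Om x -> Om y -> 0 <= s <= T ->
  `|u x s - u y s| <= 2 * Mu.
Proof.
move=> Ox Oy sT; apply: le_trans (ler_normB _ _) _.
by have := u_bounded Ox sT; have := u_bounded Oy sT; lra.
Qed.

Lemma logistic_rhs_space_diff x y s : Om x -> Om y -> 0 <= s <= T ->
  `|F x s - F y s| <= B * eucl_norm (x - y) `^ alpha + L * `|u x s - u y s|.
Proof.
move=> Ox Oy sT.
have fd : `|f x s - f y s| <= Cf * eucl_norm (x - y) `^ alpha.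
  by rewrite -(par_dist_same_time _ _ s) // f_holder.
have gd : `|g x s - g y s| <= Cg * eucl_norm (x - y) `^ alpha.
  by rewrite -(par_dist_same_time _ _ s) // g_holder.
set delta := eucl_norm (x - y) `^ alpha; set w := u x s - u y s.
have uxM := u_bounded Ox sT; have uyM := u_bounded Oy sT.
have fyM := f_bounded Oy sT.
have -> : F x s - F y s = a1 * (f x s - f y s) * u x s + a1 * f y s * w
    + a2 * (g x s - g y s) - a3 * (u x s + u y s) * w by rewrite /logistic_rhs /w; ring.
have t1 : `|a1 * (f x s - f y s) * u x s| <= a1 * (Cf * delta) * Mu.
  by rewrite !normrM (ger0_norm a1_ge0) ler_pM ?mulr_ge0 ?ler_wpM2l.
have t2 : `|a1 * f y s * w| <= a1 * Mf * `|w|.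
  by rewrite !normrM (ger0_norm a1_ge0) ler_wpM2r ?ler_wpM2l.
have t3 : `|a2 * (g x s - g y s)| <= a2 * (Cg * delta).
  by rewrite normrM (ger0_norm a2_ge0) ler_wpM2l.
have t4 : `|a3 * (u x s + u y s) * w| <= a3 * (2 * Mu) * `|w|.
  rewrite !normrM (ger0_norm a3_ge0) ler_wpM2r ?ler_wpM2l //.
  by apply: le_trans (ler_normD _ _) _; lra.
rewrite /B /L; apply: le_trans (ler_normB _ _) _.
have := ler_normD (a1 * (f x s - f y s) * u x s) (a1 * f y s * w).
have := ler_normD (a1 * (f x s - f y s) * u x s + a1 * f y s * w)
  (a2 * (g x s - g y s)).
lra.
Qed.

Lemma Rintegral_rhs_diff_le x y r : Om x -> Om y -> 0 <= r <= T ->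
  `|Rintegral mu `[0, r] (fun s => F x s - F y s)| <=
    B * eucl_norm (x - y) `^ alpha * r
    + L * Rintegral mu `[0, r] (fun s => `|u x s - u y s|).
Proof.
move=> Ox Oy rT; have /andP[r_ge0 r_leT] := rT.
set delta := eucl_norm (x - y) `^ alpha; pose w s := u x s - u y s.
have r_sub : `[0, r] `<=` `[0, T] by apply: subset_itvScc; rewrite bnd_simp.
have i_bnd (h : R -> R) (M : R) : measurable_fun `[0, T] h ->
    (forall s, 0 <= s <= T -> `|h s| <= M) -> mu.-integrable `[0, r] (EFin \o h).
  by move=> mh hM; exact: integrable_bounded_itv (measurable_itv _) r_sub mh hM.
have w_bounded s : 0 <= s <= T -> `|w s| <= 2 * Mu by exact: u_diff_bounded.
have mnw : measurable_fun `[0, T] (fun s => `|w s|).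
  apply: measurableT_comp (@normr_measurable R setT) _.
  exact: measurable_funB (u_measurable Ox) (u_measurable Oy).
have mLnw := measurable_funM (measurable_cst L) mnw.
have i_nw : mu.-integrable `[0, r] (EFin \o (fun s => `|w s|)).
  by apply: (i_bnd _ (2 * Mu) mnw) => s /w_bounded; rewrite normr_id.
have i_Lnw : mu.-integrable `[0, r] (EFin \o (fun s => L * `|w s|)).
  apply: (i_bnd _ (L * (2 * Mu)) mLnw) => s /w_bounded wM.
  by rewrite normrM normr_id (ger0_norm L_ge0) ler_wpM2l.
have i_cst : mu.-integrable `[0, r] (EFin \o (fun=> B * delta)).
  exact: (i_bnd _ `|B * delta| (measurable_cst _)).
have i_bound : mu.-integrable `[0, r] (EFin \o (fun s => B * delta + L * `|w s|)).
  apply: (i_bnd _ (`|B * delta| + L * (2 * Mu))).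
    exact: measurable_funD (measurable_cst _) mLnw.
  move=> s /w_bounded wM; apply: le_trans (ler_normD _ _) _.
  by rewrite lerD2l normrM normr_id (ger0_norm L_ge0) ler_wpM2l.
have i_Fxy : mu.-integrable `[0, r] (EFin \o (fun s => F x s - F y s)).
  apply: (i_bnd _ (MF + MF)).
    exact: measurable_funB (logistic_rhs_measurable Ox) (logistic_rhs_measurable Oy).
  move=> s sT; apply: le_trans (ler_normB _ _) _.
  exact: lerD (logistic_rhs_bounded Ox sT) (logistic_rhs_bounded Oy sT).
apply: le_trans (le_normr_Rintegral _ i_Fxy) _ => //.
rewrite -[in B * delta * r](subr0 r) -(Rintegral_cst_itv true false _ r_ge0).
rewrite -RintegralZl // -RintegralD //.
apply: le_Rintegral => //; first exact: integrable_norm.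
move=> s; rewrite /= in_itv /= => /andP[s_ge0 s_ler].
by apply: logistic_rhs_space_diff; rewrite ?s_ge0 ?(le_trans s_ler).
Qed.

Lemma u_space_diff_integral x y r : Om x -> Om y -> 0 <= r <= T ->
  `|u x r - u y r| <= (C0 + B * T) * eucl_norm (x - y) `^ alpha
                      + L * Rintegral mu `[0, r] (fun s => `|u x s - u y s|).
Proof.
move=> Ox Oy rT; have r_leT : r <= T by case/andP: rT.
have -> : u x r - u y r =
    u0 x - u0 y + Rintegral mu `[0, r] (fun s => F x s - F y s).
  have r_sub : `[0, r] `<=` `[0, T] by apply: subset_itvScc; rewrite bnd_simp.
  by rewrite RintegralB ?logistic_rhs_integrable // !u_duhamel //; ring.
apply: le_trans (ler_normD _ _) _.
apply: le_trans (lerD (u0_holder Ox Oy) (Rintegral_rhs_diff_le Ox Oy rT)) _.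
rewrite [(C0 + _) * _]mulrDl addrA lerD2r lerD2l mulrAC.
by rewrite ler_wpM2r ?powR_ge0 // ler_wpM2l.
Qed.

Lemma u_space_holder : exists2 K : R, 0 <= K &
  forall x y t, Om x -> Om y -> 0 <= t <= T ->
    `|u x t - u y t| <= K * eucl_norm (x - y) `^ alpha.
Proof.
have [K gronwallK] := gronwall T_gt0 L_ge0.
have CBT_ge0 : 0 <= C0 + B * T by rewrite addr_ge0 // mulr_ge0 // ltW.
exists (`|K| * (C0 + B * T)); first by rewrite mulr_ge0.
move=> x y t Ox Oy tT.
have A_ge0 := mulr_ge0 CBT_ge0 (powR_ge0 (eucl_norm (x - y)) alpha).
have mw := measurable_funB (u_measurable Ox) (u_measurable Oy).
have := gronwallK _ _ (2 * Mu) A_ge0 mw (fun s => u_diff_bounded Ox Oy)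
  (fun r => u_space_diff_integral Ox Oy) t tT.
by move/le_trans; apply; rewrite -mulrA ler_wpM2r // ler_norm.
Qed.

Lemma u_par_holder : exists2 C : R, 0 <= C &
  forall x y s t, Om x -> Om y -> 0 <= s <= T -> 0 <= t <= T ->
    `|u x s - u y t| <= C * par_dist alpha (x, s) (y, t).
Proof.
have [K K_ge0 uK] := u_space_holder.
pose T' := T `^ (1 - alpha / 2).
have MF_ge0 : 0 <= MF by rewrite /MF !addr_ge0 ?mulr_ge0 ?exprn_ge0.
have MFT'_ge0 : 0 <= MF * T' by rewrite mulr_ge0 ?powR_ge0.
exists (K + MF * T'); first exact: addr_ge0.
move=> x y s t Ox Oy sT tT.
have alpha2 : 0 <= alpha / 2 <= 1.
  rewrite divr_ge0 ?(ltW alpha_gt0) // ler_pdivrMr // mul1r.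
  by rewrite (le_trans alpha_le1) ?ler1n.
have st_le : 0 <= `|s - t| <= T.
  rewrite normr_ge0 ler_norml; move: sT tT => /andP[? ?] /andP[? ?].
  by apply/andP; split; lra.
have time : `|u y s - u y t| <= MF * T' * `|s - t| `^ (alpha / 2).
  apply: le_trans (u_time_lipschitz Oy tT sT) _.
  by rewrite -mulrA ler_wpM2l // le_powR_scale.
apply: le_trans (ler_distD (u y s) _ _) _; rewrite /par_dist /=.
have := uK x y s Ox Oy sT.
have := powR_ge0 (eucl_norm (x - y)) alpha; have := powR_ge0 `|s - t| (alpha / 2).
nra.
Qed.

End LogisticSolution.

Lemma par_holder_space_nonneg (R : realType) (d : nat) (alpha : R)
    (A : set ('rV[R]_d * R)) (v : 'rV[R]_d -> R -> R) :
  par_holder_space alpha A v ->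
  exists M C, [/\ 0 <= M, 0 <= C, forall p, A p -> `|v p.1 p.2| <= M &
    forall p q, A p -> A q -> `|v p.1 p.2 - v q.1 q.2| <= C * par_dist alpha p q].
Proof.
case=> [[M vM] [C vC]]; exists `|M|, `|C|; split=> // [p Ap | p q Ap Aq].
  exact: le_trans (vM p Ap) (ler_norm M).
exact: le_trans (vC p q Ap Aq) (ler_wpM2r (par_dist_ge0 _ _ _) (ler_norm C)).
Qed.

Lemma holder_space_nonneg (R : realType) (d : nat) (alpha : R)
    (A : set 'rV[R]_d) (v : 'rV[R]_d -> R) :
  holder_space alpha A v ->
  exists2 C, 0 <= C &
    forall x y, A x -> A y -> `|v x - v y| <= C * eucl_norm (x - y) `^ alpha.
Proof.
case=> _ [C vC]; exists `|C| => // x y Ax Ay.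
exact: le_trans (vC x y Ax Ay) (ler_wpM2r (powR_ge0 _ _) (ler_norm C)).
Qed.

Theorem lemma5 (R : realType) (d : nat) (Om : set 'rV[R]_d)
  (T alpha a1 a2 a3 : R) (f g u : 'rV[R]_d -> R -> R) (u0 : 'rV[R]_d -> R) :
  eucl_bounded Om -> 0 < T -> 0 < alpha < 1 ->
  0 < a1 -> 0 < a2 -> 0 < a3 ->
  par_holder_space alpha (closed_cyl Om T) f ->
  par_holder_space alpha (closed_cyl Om T) g ->
  holder_space alpha (closure Om) u0 ->
  weak_solution Om T a1 a2 a3 f g u0 u ->
  exists v : 'rV[R]_d -> R -> R,
    par_holder_space alpha (closed_cyl Om T) v /\
    (forall x t, Om x -> 0 <= t <= T -> v x t = u x t).
Proof.
move=> _ T_gt0 /andP[alpha_gt0 /ltW alpha_le1] a1_gt0 a2_gt0 a3_gt0.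
move=> /par_holder_space_nonneg[Mf [Cf [Mf_ge0 Cf_ge0 fM fC]]].
move=> /par_holder_space_nonneg[Mg [Cg [Mg_ge0 Cg_ge0 gM gC]]].
move=> /holder_space_nonneg[C0 C0_ge0 u0C] [[Mu uM] [u_meas u_duhamel]].
have cyl x t : Om x -> 0 <= t <= T -> closed_cyl Om T (x, t).
  by move=> Ox tT; split=> //; exact: subset_closure.
have uM' x t : Om x -> 0 <= t <= T -> `|u x t| <= `|Mu|.
  by move=> Ox tT; exact: le_trans (uM x t Ox tT) (ler_norm Mu).
have [C C_ge0 uC] := u_par_holder T_gt0 alpha_gt0 alpha_le1
  (ltW a1_gt0) (ltW a2_gt0) (ltW a3_gt0) Mf_ge0 Mg_ge0 (normr_ge0 Mu) Cf_ge0 Cg_ge0 C0_ge0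
  (fun x t Ox tT => fM _ (cyl x t Ox tT)) (fun x t Ox tT => gM _ (cyl x t Ox tT))
  (fun x y s t Ox Oy sT tT => fC _ _ (cyl x s Ox sT) (cyl y t Oy tT))
  (fun x y s t Ox Oy sT tT => gC _ _ (cyl x s Ox sT) (cyl y t Oy tT))
  (fun x y Ox Oy => u0C x y (subset_closure Ox) (subset_closure Oy))
  uM' u_meas u_duhamel.
have alpha01 : 0 <= alpha <= 1 by rewrite ltW.
have [v [vM vC vu]] := mcshane_extension (par_dist_ge0 alpha)
  (fun p => par_distxx p alpha_gt0) (par_distC alpha)
  (fun p q r => par_dist_triangle p q r alpha01)
  (S := [set p | Om p.1 /\ 0 <= p.2 <= T]) (u := fun p => u p.1 p.2) C_ge0
  (fun p Sp => uM' _ _ Sp.1 Sp.2) (fun p q Sp Sq => uC _ _ _ _ Sp.1 Sq.1 Sp.2 Sq.2).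
exists (fun x t => v (x, t)); split; last by move=> x t Ox tT; exact: vu.
by split; [exists `| `|Mu| | => p _ | exists C => p q _ _]; [exact: vM | exact: vC].
Qed.
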